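(* Let $\mathsf{L}\in\{\mathsf{CN4K},\mathsf{CN4K}^\pm,\mathsf{CN4K}^\curlyvee,\mathsf{CN4K}^{\Join},\mathsf{CN4K}^1\}$, $\Gamma$ a finite multiset of formulas and $\phi$ a formula. If $\mathsf{L}\models\bigwedge_{\psi\in\Gamma}\psi\to\phi$ (for $\Gamma$ empty: $\mathsf{L}\models\phi$), then the sequent $\Gamma\Rightarrow\phi$ is provable in $\mathcal{G}\mathsf{L}$.
   Context: Fix a countable set $\mathsf{Prop}$ of propositional variables. The language $\mathcal{L}$ is given by the grammar $\phi::=p\mid{\sim}\phi\mid(\phi\wedge\phi)\mid(\phi\vee\phi)\mid(\phi\to\phi)\mid\Box\phi\mid\Diamond\phi$ with $p\in\mathsf{Prop}$. Semantics. A $\mathsf{CN4K}$ frame is $\langle W,\le,R^+_\Box,R^-_\Box,R^+_\Diamond,R^-_\Diamond\rangle$ with $W\ne\varnothing$, $\le$ a preorder on $W$, and four arbitrary binary relations; $R(w)=\{w'\mid wRw'\}$. It is $\pm$-birelational if $R^+_\Box=R^+_\Diamond$ and $R^-_\Box=R^-_\Diamond$; $\curlyvee$-birelational if $R^+_\Box=R^-_\Box$ and $R^+_\Diamond=R^-_\Diamond$; $\Join$-birelational if $R^+_\Box=R^-_\Diamond$ and $R^+_\Diamond=R^-_\Box$; monorelational if all four coincide. A model adds $v^+,v^-:\mathsf{Prop}\to2^W$ upward closed under $\le$. Support: $w\Vdash^\pm p$ iff $w\in v^\pm(p)$; $w\Vdash^+{\sim}\phi$ iff $w\Vdash^-\phi$;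 $w\Vdash^-{\sim}\phi$ iff $w\Vdash^+\phi$; $w\Vdash^+\phi\wedge\chi$ iff both; $w\Vdash^-\phi\wedge\chi$ iff $w\Vdash^-\phi$ or $w\Vdash^-\chi$; $w\Vdash^+\phi\vee\chi$ iff $w\Vdash^+\phi$ or $w\Vdash^+\chi$; $w\Vdash^-\phi\vee\chi$ iff both negatively supported; $w\Vdash^+\phi\to\chi$ iff for all $w'\ge w$, $w'\Vdash^+\phi$ implies $w'\Vdash^+\chi$; $w\Vdash^-\phi\to\chi$ iff $w\Vdash^+\phi$ and $w\Vdash^-\chi$; $w\Vdash^+\Box\phi$ iff $\forall w'\ge w\ \forall w''\in R^+_\Box(w')$: $w''\Vdash^+\phi$; $w\Vdash^-\Box\phi$ iff $\forall w'\ge w\ \exists w''\in R^-_\Box(w')$: $w''\Vdash^-\phi$; $w\Vdash^+\Diamond\phi$ iff $\forall w'\ge w\ \exists w''\in R^+_\Diamond(w')$: $w''\Vdash^+\phi$; $w\Vdash^-\Diamond\phi$ iff $\forall w'\ge w\ \forall w''\in R^-_\Diamond(w')$: $w''\Vdash^-\phi$. $\mathsf{CN4K}$, $\mathsf{CN4K}^\pm$, $\mathsf{CN4K}^\curlyvee$, $\mathsf{CN4K}^{\Join}$, $\mathsf{CN4K}^1$ are the logics of all frames, $\pm$-, $\curlyvee$-, $\Join$-birelational, and monorelational frames, resp.; $\mathsf{L}\models\chi$ means $\mathfrak{M},w\Vdash^+\chi$ for every model $\mathfrak{M}$ on a frame of the class of $\mathsf{L}$ and every state $w$. Sequents. A sequent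 is $\Gamma\Rightarrow\phi$ with $\Gamma$ a finite multiset of formulas and $\phi$ a single formula. $\Gamma^\Box=\{\phi\mid\Box\phi\in\Gamma\}$, $\Gamma^\Diamond_\sim=\{{\sim}\phi\mid{\sim}\Diamond\phi\in\Gamma\}$ (multisets). Rules are written premise(s) / conclusion. Rules of $\mathcal{G}\mathsf{N4}$: axioms $p,\Gamma\Rightarrow p$ and ${\sim}p,\Gamma\Rightarrow{\sim}p$ ($p\in\mathsf{Prop}$); ${\sim}{\sim}_l$: $\phi,\Gamma\Rightarrow\psi$ / ${\sim}{\sim}\phi,\Gamma\Rightarrow\psi$; ${\sim}{\sim}_r$: $\Gamma\Rightarrow\phi$ / $\Gamma\Rightarrow{\sim}{\sim}\phi$; $\wedge_l$: $\phi,\chi,\Gamma\Rightarrow\psi$ / $\phi\wedge\chi,\Gamma\Rightarrow\psi$; $\wedge_r$: $\Gamma\Rightarrow\phi$ and $\Gamma\Rightarrow\chi$ / $\Gamma\Rightarrow\phi\wedge\chi$; $\vee_l$: $\phi,\Gamma\Rightarrow\psi$ and $\chi,\Gamma\Rightarrow\psi$ / $\phi\vee\chi,\Gamma\Rightarrow\psi$; $\vee_{r_1}$: $\Gamma\Rightarrow\phi$ / $\Gamma\Rightarrow\phi\vee\chi$; $\vee_{r_2}$: $\Gamma\Rightarrow\chi$ / $\Gamma\Rightarrow\phi\vee\chi$; ${\sim}\vee_l$: ${\sim}\phi,{\sim}\chi,\Gamma\Rightarrow\psi$ / ${\sim}(\phi\vee\chi),\Gamma\Rightarrow\psi$; ${\sim}\vee_r$: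 $\Gamma\Rightarrow{\sim}\phi$ and $\Gamma\Rightarrow{\sim}\chi$ / $\Gamma\Rightarrow{\sim}(\phi\vee\chi)$; ${\sim}\wedge_l$: ${\sim}\phi,\Gamma\Rightarrow\psi$ and ${\sim}\chi,\Gamma\Rightarrow\psi$ / ${\sim}(\phi\wedge\chi),\Gamma\Rightarrow\psi$; ${\sim}\wedge_{r_1}$: $\Gamma\Rightarrow{\sim}\phi$ / $\Gamma\Rightarrow{\sim}(\phi\wedge\chi)$; ${\sim}\wedge_{r_2}$: $\Gamma\Rightarrow{\sim}\chi$ / $\Gamma\Rightarrow{\sim}(\phi\wedge\chi)$; $\to_l$: $\phi\to\chi,\Gamma\Rightarrow\phi$ and $\chi,\Gamma\Rightarrow\psi$ / $\phi\to\chi,\Gamma\Rightarrow\psi$; $\to_r$: $\Gamma,\phi\Rightarrow\chi$ / $\Gamma\Rightarrow\phi\to\chi$; ${\sim}\!\to_l$: $\phi,{\sim}\chi,\Gamma\Rightarrow\psi$ / ${\sim}(\phi\to\chi),\Gamma\Rightarrow\psi$; ${\sim}\!\to_r$: $\Gamma\Rightarrow\phi$ and $\Gamma\Rightarrow{\sim}\chi$ / $\Gamma\Rightarrow{\sim}(\phi\to\chi)$. Modal rules: $\Box$: $\Gamma^\Box\Rightarrow\chi$ / $\Gamma\Rightarrow\Box\chi$; $\Diamond$: $\phi\Rightarrow\chi$ / $\Gamma,\Diamond\phi\Rightarrow\Diamond\chi$; $\Box_\sim$: ${\sim}\phi\Rightarrow{\sim}\chi$ / $\Gamma,{\sim}\Box\phi\Rightarrow{\sim}\Box\chi$;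 $\Diamond_\sim$: $\Gamma^\Diamond_\sim\Rightarrow{\sim}\chi$ / $\Gamma\Rightarrow{\sim}\Diamond\chi$; $\Diamond^\pm$: $\Gamma^\Box,\phi\Rightarrow\chi$ / $\Gamma,\Diamond\phi\Rightarrow\Diamond\chi$; $\Box^\pm_\sim$: $\Gamma^\Diamond_\sim,{\sim}\phi\Rightarrow{\sim}\chi$ / $\Gamma,{\sim}\Box\phi\Rightarrow{\sim}\Box\chi$; $\Diamond^\curlyvee$: $\Gamma^\Diamond_\sim,\phi\Rightarrow\chi$ / $\Gamma,\Diamond\phi\Rightarrow\Diamond\chi$; $\Box^\curlyvee_\sim$: $\Gamma^\Box,{\sim}\phi\Rightarrow{\sim}\chi$ / $\Gamma,{\sim}\Box\phi\Rightarrow{\sim}\Box\chi$; $\Box^{\Join}$: $\Gamma^\Box,\Gamma^\Diamond_\sim\Rightarrow\chi$ / $\Gamma\Rightarrow\Box\chi$; $\Diamond^{\Join}$: ${\sim}\phi\Rightarrow\chi$ / $\Gamma,{\sim}\Box\phi\Rightarrow\Diamond\chi$; $\Box^{\Join}_\sim$: $\phi\Rightarrow{\sim}\chi$ / $\Gamma,\Diamond\phi\Rightarrow{\sim}\Box\chi$; $\Diamond^{\Join}_\sim$: $\Gamma^\Box,\Gamma^\Diamond_\sim\Rightarrow{\sim}\chi$ / $\Gamma\Rightarrow{\sim}\Diamond\chi$; $\Diamond^1$: $\Gamma^\Box,\Gamma^\Diamond_\sim,\phi\Rightarrow\chi$ / $\Gamma,\Diamond\phi\Rightarrow\Diamond\chi$;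 $\Box^1_\sim$: $\Gamma^\Box,\Gamma^\Diamond_\sim,{\sim}\phi\Rightarrow{\sim}\chi$ / $\Gamma,{\sim}\Box\phi\Rightarrow{\sim}\Box\chi$; $\Diamond^{1,\Join}$: $\Gamma^\Box,\Gamma^\Diamond_\sim,{\sim}\phi\Rightarrow\chi$ / $\Gamma,{\sim}\Box\phi\Rightarrow\Diamond\chi$; $\Box^{1,\Join}_\sim$: $\Gamma^\Box,\Gamma^\Diamond_\sim,\phi\Rightarrow{\sim}\chi$ / $\Gamma,\Diamond\phi\Rightarrow{\sim}\Box\chi$. Calculi: $\mathcal{G}\mathsf{CN4K}=\mathcal{G}\mathsf{N4}+\{\Box,\Diamond,\Box_\sim,\Diamond_\sim\}$; $\mathcal{G}\mathsf{CN4K}^\curlyvee=\mathcal{G}\mathsf{N4}+\{\Box,\Diamond^\curlyvee,\Box^\curlyvee_\sim,\Diamond_\sim\}$; $\mathcal{G}\mathsf{CN4K}^\pm=\mathcal{G}\mathsf{N4}+\{\Box,\Diamond^\pm,\Box^\pm_\sim,\Diamond_\sim\}$; $\mathcal{G}\mathsf{CN4K}^{\Join}=\mathcal{G}\mathsf{N4}+\{\Box^{\Join},\Diamond,\Diamond^{\Join},\Box_\sim,\Box^{\Join}_\sim,\Diamond^{\Join}_\sim\}$; $\mathcal{G}\mathsf{CN4K}^1=\mathcal{G}\mathsf{N4}+\{\Box^{\Join},\Diamond^1,\Diamond^{1,\Join},\Box^1_\sim,\Box^{1,\Join}_\sim,\Diamond^{\Join}_\sim\}$. A proof is a finite tree of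 sequents, each node obtained from its children by a rule, whose leaves are axioms. *)

From Stdlib Require Import List Permutation.
Import ListNotations.

Inductive form : Type :=
| Var  : nat -> form
| Neg  : form -> form          (* strong negation ~ *)
| And  : form -> form -> form
| Or   : form -> form -> form
| Imp  : form -> form -> form
| Box  : form -> form
| Dia  : form -> form.

Record model : Type := Model {
  W   : Type;
  le  : W -> W -> Prop;
  Rbp : W -> W -> Prop;
  Rbm : W -> W -> Prop;
  Rdp : W -> W -> Prop;
  Rdm : W -> W -> Prop;
  vp  : nat -> W -> Prop;
  vm  : nat -> W -> Prop
}.

(* sup M true phi w  :  w ||-^+ phi ;  sup M false phi w  :  w ||-^- phi *)
Fixpoint sup (M : model) (b : bool) (phi : form) (w : W M) {struct phi} : Prop :=
  match phi with
  | Var p => if b then vp M p w else vm M p w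
  | Neg a => sup M (negb b) a w
  | And a c => if b then sup M true a w /\ sup M true c w
               else sup M false a w \/ sup M false c w
  | Or a c => if b then sup M true a w \/ sup M true c w
              else sup M false a w /\ sup M false c w
  | Imp a c => if b then forall w', le M w w' -> sup M true a w' -> sup M true c w'
               else sup M true a w /\ sup M false c w
  | Box a => if b then forall w', le M w w' -> forall w'', Rbp M w' w'' -> sup M true a w''
             else forall w', le M w w' -> exists w'', Rbm M w' w'' /\ sup M false a w''
  | Dia a => if b then forall w', le M w w' -> exists w'', Rdp M w' w'' /\ sup M true a w''
             else forall w', le M w w' -> forall w'', Rdm M w' w'' -> sup M false a w''
  end.

Inductive logic : Type := CN4K | CN4Kpm | CN4Kvee | CN4Kjoin | CN4K1.

Definition frame_class (L : logic) (M : model) : Prop :=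
  match L with
  | CN4K => True
  | CN4Kpm => Rbp M = Rdp M /\ Rbm M = Rdm M
  | CN4Kvee => Rbp M = Rbm M /\ Rdp M = Rdm M
  | CN4Kjoin => Rbp M = Rdm M /\ Rdp M = Rbm M
  | CN4K1 => Rbp M = Rbm M /\ Rbm M = Rdp M /\ Rdp M = Rdm M
  end.

Definition is_model (L : logic) (M : model) : Prop :=
  inhabited (W M) /\
  (forall w, le M w w) /\
  (forall u v w, le M u v -> le M v w -> le M u w) /\
  frame_class L M /\
  (forall p u v, le M u v -> vp M p u -> vp M p v) /\
  (forall p u v, le M u v -> vm M p u -> vm M p v).

Definition valid (L : logic) (chi : form) : Prop :=
  forall M : model, is_model L M -> forall w : W M, sup M true chi w.

Definition seq_valid (L : logic) (G : list form) (phi : form) : Prop :=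
  match G with
  | [] => valid L phi
  | g :: gs => valid L (Imp (fold_left And gs g) phi)
  end.

(* Multisets are represented by lists; every rule's conclusion context is taken
   up to permutation. *)

Fixpoint boxes (G : list form) : list form :=
  match G with
  | [] => []
  | Box a :: G' => a :: boxes G'
  | _ :: G' => boxes G'
  end.

Fixpoint ndias (G : list form) : list form :=
  match G with
  | [] => []
  | Neg (Dia a) :: G' => Neg a :: ndias G'
  | _ :: G' => ndias G'
  end.

Inductive prov (L : logic) : list form -> form -> Prop :=
| ax_var : forall p G D, Permutation D (Var p :: G) -> prov L D (Var p)
| ax_nvar : forall p G D, Permutation D (Neg (Var p) :: G) -> prov L D (Neg (Var p))
| nn_l : forall a G D psi, Permutation D (Neg (Neg a) :: G) ->
    prov L (a :: G) psi -> prov L D psi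
| nn_r : forall G a, prov L G a -> prov L G (Neg (Neg a))
| and_l : forall a c G D psi, Permutation D (And a c :: G) ->
    prov L (a :: c :: G) psi -> prov L D psi
| and_r : forall G a c, prov L G a -> prov L G c -> prov L G (And a c)
| or_l : forall a c G D psi, Permutation D (Or a c :: G) ->
    prov L (a :: G) psi -> prov L (c :: G) psi -> prov L D psi
| or_r1 : forall G a c, prov L G a -> prov L G (Or a c)
| or_r2 : forall G a c, prov L G c -> prov L G (Or a c)
| nor_l : forall a c G D psi, Permutation D (Neg (Or a c) :: G) ->
    prov L (Neg a :: Neg c :: G) psi -> prov L D psi
| nor_r : forall G a c, prov L G (Neg a) -> prov L G (Neg c) -> prov L G (Neg (Or a c))
| nand_l : forall a c G D psi, Permutation D (Neg (And a c) :: G) ->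
    prov L (Neg a :: G) psi -> prov L (Neg c :: G) psi -> prov L D psi
| nand_r1 : forall G a c, prov L G (Neg a) -> prov L G (Neg (And a c))
| nand_r2 : forall G a c, prov L G (Neg c) -> prov L G (Neg (And a c))
| imp_l : forall a c G D psi, Permutation D (Imp a c :: G) ->
    prov L (Imp a c :: G) a -> prov L (c :: G) psi -> prov L D psi
| imp_r : forall G a c, prov L (a :: G) c -> prov L G (Imp a c)
| nimp_l : forall a c G D psi, Permutation D (Neg (Imp a c) :: G) ->
    prov L (a :: Neg c :: G) psi -> prov L D psi
| nimp_r : forall G a c, prov L G a -> prov L G (Neg c) -> prov L G (Neg (Imp a c))
| r_box : forall G c, In L [CN4K; CN4Kpm; CN4Kvee] ->
    prov L (boxes G) c -> prov L G (Box c)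
| r_dia : forall a c G D, In L [CN4K; CN4Kjoin] -> Permutation D (Dia a :: G) ->
    prov L [a] c -> prov L D (Dia c)
| r_nbox : forall a c G D, In L [CN4K; CN4Kjoin] -> Permutation D (Neg (Box a) :: G) ->
    prov L [Neg a] (Neg c) -> prov L D (Neg (Box c))
| r_ndia : forall G c, In L [CN4K; CN4Kpm; CN4Kvee] ->
    prov L (ndias G) (Neg c) -> prov L G (Neg (Dia c))
| r_dia_pm : forall a c G D, L = CN4Kpm -> Permutation D (Dia a :: G) ->
    prov L (boxes G ++ [a]) c -> prov L D (Dia c)
| r_nbox_pm : forall a c G D, L = CN4Kpm -> Permutation D (Neg (Box a) :: G) ->
    prov L (ndias G ++ [Neg a]) (Neg c) -> prov L D (Neg (Box c))
| r_dia_vee : forall a c G D, L = CN4Kvee -> Permutation D (Dia a :: G) ->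
    prov L (ndias G ++ [a]) c -> prov L D (Dia c)
| r_nbox_vee : forall a c G D, L = CN4Kvee -> Permutation D (Neg (Box a) :: G) ->
    prov L (boxes G ++ [Neg a]) (Neg c) -> prov L D (Neg (Box c))
| r_box_join : forall G c, In L [CN4Kjoin; CN4K1] ->
    prov L (boxes G ++ ndias G) c -> prov L G (Box c)
| r_dia_join : forall a c G D, L = CN4Kjoin -> Permutation D (Neg (Box a) :: G) ->
    prov L [Neg a] c -> prov L D (Dia c)
| r_nbox_join : forall a c G D, L = CN4Kjoin -> Permutation D (Dia a :: G) ->
    prov L [a] (Neg c) -> prov L D (Neg (Box c))
| r_ndia_join : forall G c, In L [CN4Kjoin; CN4K1] ->
    prov L (boxes G ++ ndias G) (Neg c) -> prov L G (Neg (Dia c))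
| r_dia_1 : forall a c G D, L = CN4K1 -> Permutation D (Dia a :: G) ->
    prov L (boxes G ++ ndias G ++ [a]) c -> prov L D (Dia c)
| r_nbox_1 : forall a c G D, L = CN4K1 -> Permutation D (Neg (Box a) :: G) ->
    prov L (boxes G ++ ndias G ++ [Neg a]) (Neg c) -> prov L D (Neg (Box c))
| r_dia_1join : forall a c G D, L = CN4K1 -> Permutation D (Neg (Box a) :: G) ->
    prov L (boxes G ++ ndias G ++ [Neg a]) c -> prov L D (Dia c)
| r_nbox_1join : forall a c G D, L = CN4K1 -> Permutation D (Dia a :: G) ->
    prov L (boxes G ++ ndias G ++ [a]) (Neg c) -> prov L D (Neg (Box c)).

(* If Γ ⇒ φ is not provable, a canonical countermodel refutes it. Its worlds are
   saturated sequents: starting from Γ, the invertible left rules (and the left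
   implication rule, whenever the antecedent is provable) are applied backwards,
   always choosing a premise that still fails to prove the goal. Worlds are
   ordered by inclusion of the formulas met during saturation, and the four
   accessibility relations are read off the modal rules of the calculus, those
   identified by the frame class of L being made equal. The truth lemma
   then says that every formula met is supported, and every supported formula is
   provable from the saturated context; so Γ holds at the world built from Γ
   while φ does not. *)

From Stdlib Require Import List Permutation Classical Lia Wf_nat.
Import ListNotations.

Lemma boxes_flat_map (l : list form) :
  boxes l = flat_map (fun x => match x with Box a => [a] | _ => [] end) l.
Proof. induction l as [|[] l IH]; cbn; rewrite ?IH; reflexivity. Qed.

Lemma ndias_flat_map (l : list form) :
  ndias l = flat_map (fun x => match x with Neg (Dia a) => [Neg a] | _ => [] end) l.
Proof. induction l as [|[| [] | | | | |] l IH]; cbn; rewrite ?IH; reflexivity. Qed.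

Lemma Permutation_boxes (l l' : list form) :
  Permutation l l' -> Permutation (boxes l) (boxes l').
Proof. rewrite !boxes_flat_map; apply Permutation_flat_map. Qed.

Lemma Permutation_ndias (l l' : list form) :
  Permutation l l' -> Permutation (ndias l) (ndias l').
Proof. rewrite !ndias_flat_map; apply Permutation_flat_map. Qed.

Lemma in_boxes (a : form) (l : list form) : In (Box a) l -> In a (boxes l).
Proof. rewrite boxes_flat_map; intro H; apply in_flat_map; exists (Box a); cbn; auto. Qed.

Lemma in_ndias (a : form) (l : list form) : In (Neg (Dia a)) l -> In (Neg a) (ndias l).
Proof. rewrite ndias_flat_map; intro H; apply in_flat_map; exists (Neg (Dia a)); cbn; auto. Qed.

Lemma in_Permutation_cons (phi : form) (l : list form) :
  In phi l -> exists G, Permutation l (phi :: G).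
Proof.
  intro H; destruct (in_split _ _ H) as (l1 & l2 & ->).
  exists (l1 ++ l2); apply Permutation_sym, Permutation_middle.
Qed.

Lemma prov_perm (L : logic) (D D' : list form) (phi : form) :
  Permutation D D' -> prov L D phi -> prov L D' phi.
Proof.
  intros HD H; revert D' HD.
  induction H; intros D' HD;
    [ eapply ax_var | eapply ax_nvar | eapply nn_l | apply nn_r | eapply and_l
    | apply and_r | eapply or_l | apply or_r1 | apply or_r2 | eapply nor_l
    | apply nor_r | eapply nand_l | apply nand_r1 | apply nand_r2 | eapply imp_l
    | apply imp_r | eapply nimp_l | apply nimp_r | apply r_box | eapply r_dia
    | eapply r_nbox | apply r_ndia | eapply r_dia_pm | eapply r_nbox_pm
    | eapply r_dia_vee | eapply r_nbox_vee | apply r_box_join | eapply r_dia_join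
    | eapply r_nbox_join | apply r_ndia_join | eapply r_dia_1 | eapply r_nbox_1
    | eapply r_dia_1join | eapply r_nbox_1join ];
    eauto using Permutation_boxes, Permutation_ndias, Permutation_app,
      Permutation_sym, perm_trans, Permutation_refl.
Qed.

Lemma ax_in (L : logic) (D : list form) (p : nat) : In (Var p) D -> prov L D (Var p).
Proof. intro H; destruct (in_Permutation_cons _ _ H) as [G HG]; exact (ax_var L p G D HG). Qed.

Lemma nax_in (L : logic) (D : list form) (p : nat) :
  In (Neg (Var p)) D -> prov L D (Neg (Var p)).
Proof. intro H; destruct (in_Permutation_cons _ _ H) as [G HG]; exact (ax_nvar L p G D HG). Qed.

(* [facts] collects every formula met so far; a formula leaves the context once
   its components (in the sense of the corresponding left rule) are facts. *)
Definition decomposed (facts : list form) (phi : form) : Prop :=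
  match phi with
  | And a c => In a facts /\ In c facts
  | Or a c => In a facts \/ In c facts
  | Imp _ c => In c facts
  | Neg (Neg a) => In a facts
  | Neg (And a c) => In (Neg a) facts \/ In (Neg c) facts
  | Neg (Or a c) => In (Neg a) facts /\ In (Neg c) facts
  | Neg (Imp a c) => In a facts /\ In (Neg c) facts
  | _ => False
  end.

Definition accounted (facts ctx : list form) : Prop :=
  forall phi, In phi facts -> In phi ctx \/ decomposed facts phi.

Definition irreducible (L : logic) (facts ctx : list form) (phi : form) : Prop :=
  match phi with
  | And _ _ | Or _ _ | Neg (Neg _) | Neg (And _ _) | Neg (Or _ _) | Neg (Imp _ _) => False
  | Imp a c => In c facts \/ ~ prov L ctx a
  | _ => True
  end.

Definition saturated (L : logic) (facts ctx : list form) : Prop :=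
  accounted facts ctx /\ forall phi, In phi ctx -> irreducible L facts ctx phi.

Definition avoids (L : logic) (ctx : list form) (goal : option form) : Prop :=
  match goal with Some psi => ~ prov L ctx psi | None => True end.

Lemma accounted_refl (l : list form) : accounted l l.
Proof. intros x H; left; exact H. Qed.

Lemma decomposed_incl (f f' : list form) (phi : form) :
  incl f f' -> decomposed f phi -> decomposed f' phi.
Proof.
  intro H; destruct phi as [| [] | | | | |]; cbn; firstorder.
Qed.

Lemma accounted_cons (a : form) (facts ctx : list form) :
  accounted facts ctx -> accounted (a :: facts) (a :: ctx).
Proof.
  intros Hacc x [<-|Hx]; [left; left; reflexivity|].
  destruct (Hacc x Hx) as [H|H]; [left; right; exact H|].
  right; eapply decomposed_incl; [|exact H]; apply incl_tl, incl_refl.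
Qed.

Lemma accounted_step (facts ctx G new : list form) (phi : form) :
  accounted facts ctx -> Permutation ctx (phi :: G) ->
  decomposed (new ++ facts) phi -> accounted (new ++ facts) (new ++ G).
Proof.
  intros Hacc HG Hphi psi Hpsi.
  apply in_app_or in Hpsi as [Hnew|Hold]; [left; apply in_or_app; left; exact Hnew|].
  destruct (Hacc psi Hold) as [Hctx|Hdec].
  - apply (Permutation_in _ HG) in Hctx as [<-|HinG]; [right; exact Hphi|].
    left; apply in_or_app; right; exact HinG.
  - right; eapply decomposed_incl; [|exact Hdec]; apply incl_appr, incl_refl.
Qed.

(* Negation doubles the weight, so that pushing [~] inwards decreases it. *)
Fixpoint weight (phi : form) : nat :=
  match phi with
  | Var _ => 1
  | Neg a => 2 * weight a + 1
  | And a c | Or a c | Imp a c => weight a + weight c + 1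
  | Box a | Dia a => weight a + 1
  end.

Definition weights (l : list form) : nat := list_sum (map weight l).

Lemma avoids_back (L : logic) (ctx G' : list form) (goal : option form) :
  (forall psi, prov L G' psi -> prov L ctx psi) -> avoids L ctx goal -> avoids L G' goal.
Proof. destruct goal; cbn; auto. Qed.

Lemma avoids_branch (L : logic) (ctx G1 G2 : list form) (goal : option form) :
  (forall psi, prov L G1 psi -> prov L G2 psi -> prov L ctx psi) ->
  avoids L ctx goal -> avoids L G1 goal \/ avoids L G2 goal.
Proof.
  destruct goal as [psi|]; cbn; [|auto].
  intros Hrule Hn; destruct (classic (prov L G1 psi)); auto.
Qed.

Lemma reduce_step (L : logic) (facts ctx G : list form) (goal : option form) (phi : form) :
  Permutation ctx (phi :: G) -> ~ irreducible L facts ctx phi -> avoids L ctx goal ->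
  exists new, decomposed (new ++ facts) phi /\ weights new < weight phi /\
              avoids L (new ++ G) goal.
Proof.
  unfold weights; intros HG Hred Hav.
  destruct phi as [p|[p|a|a c|a c|a c|a|a]|a c|a c|a c|a|a]; cbn in Hred;
    try (exfalso; apply Hred; exact I).
  - exists [a]; cbn; split; [auto|split; [lia|]].
    eapply avoids_back; [|exact Hav]; intros psi H; eapply nn_l; eauto.
  - destruct (avoids_branch L ctx (Neg a :: G) (Neg c :: G) goal) as [H|H];
      [intros psi H1 H2; eapply nand_l; eauto | exact Hav | exists [Neg a] | exists [Neg c]];
      cbn; repeat split; auto; lia.
  - exists [Neg a; Neg c]; cbn; split; [auto|split; [lia|]].
    eapply avoids_back; [|exact Hav]; intros psi H; eapply nor_l; eauto.
  - exists [a; Neg c]; cbn; split; [auto|split; [lia|]].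
    eapply avoids_back; [|exact Hav]; intros psi H; eapply nimp_l; eauto.
  - exists [a; c]; cbn; split; [auto|split; [lia|]].
    eapply avoids_back; [|exact Hav]; intros psi H; eapply and_l; eauto.
  - destruct (avoids_branch L ctx (a :: G) (c :: G) goal) as [H|H];
      [intros psi H1 H2; eapply or_l; eauto | exact Hav | exists [a] | exists [c]];
      cbn; repeat split; auto; lia.
  - assert (Ha : prov L ctx a) by (apply NNPP; tauto).
    exists [c]; cbn; split; [auto|split; [lia|]].
    eapply avoids_back; [|exact Hav]; intros psi H.
    eapply imp_l; [exact HG | eapply prov_perm; [exact HG|exact Ha] | exact H].
Qed.

Lemma saturate (L : logic) (goal : option form) (facts ctx : list form) :
  accounted facts ctx -> avoids L ctx goal ->
  exists facts' ctx', incl facts facts' /\ saturated L facts' ctx' /\ avoids L ctx' goal.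
Proof.
  revert facts; induction ctx as [ctx IH] using (induction_ltof1 _ weights).
  intros facts Hacc Hav.
  destruct (classic (exists phi, In phi ctx /\ ~ irreducible L facts ctx phi))
    as [(phi & Hin & Hred)|Hirr].
  - destruct (in_Permutation_cons _ _ Hin) as [G HG].
    destruct (reduce_step L facts ctx G goal phi HG Hred Hav) as (new & Hdec & Hlt & Hav').
    destruct (IH (new ++ G)) with (new ++ facts) as (f' & c' & Hincl & Hsat & Hav'').
    + unfold ltof, weights in *.
      rewrite map_app, list_sum_app, (Permutation_list_sum (Permutation_map weight HG)).
      change (list_sum (map weight (phi :: G))) with (weight phi + list_sum (map weight G)).
      lia.
    + exact (accounted_step _ _ _ _ _ Hacc HG Hdec).
    + exact Hav'.
    + exists f', c'; split; [|auto].
      intros x Hx; apply Hincl, in_or_app; right; exact Hx.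
  - exists facts, ctx; split; [apply incl_refl|split; [|exact Hav]].
    split; [exact Hacc|]; intros phi Hphi; apply NNPP; eauto.
Qed.

(* A world carries, besides a saturated sequent, an optional obligation
   [Dia d] or [~Box d] that its witnesses must respect. *)
Record world (L : logic) : Type := World {
  facts : list form;
  ctx : list form;
  obligation : option form;
  saturation : saturated L facts ctx }.
Arguments World {L}.
Arguments facts {L}.
Arguments ctx {L}.
Arguments obligation {L}.
Arguments saturation {L}.

Definition with_obligation {L : logic} (X : world L) (o : option form) : world L :=
  World (facts X) (ctx X) o (saturation X).

Lemma extend_to_world (L : logic) (fs G : list form) (goal : option form) :
  accounted fs G -> avoids L G goal ->
  exists Y : world L, incl fs (facts Y) /\ avoids L (ctx Y) goal.
Proof.
  intros Hacc Hav.
  destruct (saturate L goal fs G Hacc Hav) as (fs' & G' & Hincl & Hsat & Hav').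
  exists (World fs' G' None Hsat); auto.
Qed.

Lemma fact_cases (L : logic) (X : world L) (phi : form) : In phi (facts X) ->
  (In phi (ctx X) /\ irreducible L (facts X) (ctx X) phi) \/ decomposed (facts X) phi.
Proof.
  intro H; destruct (saturation X) as [Hacc Hirr].
  destruct (Hacc phi H); auto.
Qed.

Lemma fact_in_ctx (L : logic) (X : world L) (phi : form) :
  In phi (facts X) -> ~ decomposed (facts X) phi -> In phi (ctx X).
Proof. intros H Hn; destruct (fact_cases L X phi H) as [[]|]; tauto. Qed.

Inductive kind : Type := BoxPos | BoxNeg | DiaPos | DiaNeg.

Lemma kind_eq_dec (j k : kind) : {j = k} + {j <> k}.
Proof. decide equality. Defined.

(* Relations with the same representative coincide in the frame class of [L];
   defining [rel] through [block] makes them equal by conversion. *)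
Definition block (L : logic) (k : kind) : kind :=
  match L, k with
  | CN4Kpm, DiaPos | CN4Kvee, BoxNeg | CN4Kjoin, DiaNeg => BoxPos
  | CN4Kpm, DiaNeg => BoxNeg
  | CN4Kvee, DiaNeg | CN4Kjoin, BoxNeg => DiaPos
  | CN4K1, _ => BoxPos
  | _, _ => k
  end.

(* What each relation demands of a successor: the universal relations pass on
   boxed and negated-diamond formulas, the existential ones make a witness
   refute [d] (resp. [~d]) when the obligation [Dia d] (resp. [~Box d]) is not
   provable. *)
Definition transfer {L : logic} (k : kind) (X Y : world L) : Prop :=
  match k with
  | BoxPos => forall a, In (Box a) (ctx X) -> In a (facts Y)
  | DiaNeg => forall a, In (Neg (Dia a)) (ctx X) -> In (Neg a) (facts Y)
  | DiaPos => forall d, obligation X = Some (Dia d) ->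
      ~ prov L (ctx X) (Dia d) -> ~ prov L (ctx Y) d
  | BoxNeg => forall d, obligation X = Some (Neg (Box d)) ->
      ~ prov L (ctx X) (Neg (Box d)) -> ~ prov L (ctx Y) (Neg d)
  end.

Definition rel (L : logic) (k : kind) (X Y : world L) : Prop :=
  forall j, block L j = block L k -> transfer j X Y.

Definition canonical (L : logic) : model :=
  Model (world L) (fun X Y => incl (facts X) (facts Y))
    (rel L BoxPos) (rel L BoxNeg) (rel L DiaPos) (rel L DiaNeg)
    (fun p X => In (Var p) (facts X)) (fun p X => In (Neg (Var p)) (facts X)).

Lemma canonical_is_model (L : logic) (X : world L) : is_model L (canonical L).
Proof.
  split; [exact (inhabits X)|].
  split; [intros Y; apply incl_refl|].
  split; [intros U V Y; cbn; eauto using incl_tran|].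
  split; [destruct L; cbn; repeat split|].
  split; intros p U V; cbn; auto.
Qed.

(* The modal rules of the calculus introducing a formula whose semantics uses the
   relation [k] keep the components of those boxed and negated-diamond formulas
   whose relations are identified with [k]. *)
Definition modal_premises (L : logic) (k : kind) (G : list form) : list form :=
  (if kind_eq_dec (block L BoxPos) (block L k) then boxes G else []) ++
  (if kind_eq_dec (block L DiaNeg) (block L k) then ndias G else []).

Lemma Permutation_modal_premises (L : logic) (k : kind) (G G' : list form) :
  Permutation G G' -> Permutation (modal_premises L k G) (modal_premises L k G').
Proof.
  intro HG; unfold modal_premises.
  apply Permutation_app; destruct kind_eq_dec;
    auto using Permutation_boxes, Permutation_ndias.
Qed.

Lemma prov_box (L : logic) (G : list form) (c : form) :
  prov L (modal_premises L BoxPos G) c -> prov L G (Box c).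
Proof.
  destruct L; cbn; rewrite ?app_nil_r; intro H;
    solve [apply r_box; cbn; auto | apply r_box_join; cbn; auto].
Qed.

Lemma prov_ndia (L : logic) (G : list form) (c : form) :
  prov L (modal_premises L DiaNeg G) (Neg c) -> prov L G (Neg (Dia c)).
Proof.
  destruct L; cbn; intro H;
    solve [apply r_ndia; cbn; auto | apply r_ndia_join; cbn; auto].
Qed.

Lemma prov_dia (L : logic) (D G : list form) (a d : form) :
  Permutation D (Dia a :: G) ->
  prov L (modal_premises L DiaPos G ++ [a]) d -> prov L D (Dia d).
Proof.
  destruct L; cbn; rewrite ?app_nil_r, <-?app_assoc; intros HD H.
  - eapply r_dia; cbn; eauto.
  - eapply r_dia_pm; eauto.
  - eapply r_dia_vee; eauto.
  - eapply r_dia; cbn; eauto.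
  - eapply r_dia_1; eauto.
Qed.

Lemma prov_nbox (L : logic) (D G : list form) (a d : form) :
  Permutation D (Neg (Box a) :: G) ->
  prov L (modal_premises L BoxNeg G ++ [Neg a]) (Neg d) -> prov L D (Neg (Box d)).
Proof.
  destruct L; cbn; rewrite ?app_nil_r, <-?app_assoc; intros HD H.
  - eapply r_nbox; cbn; eauto.
  - eapply r_nbox_pm; eauto.
  - eapply r_nbox_vee; eauto.
  - eapply r_nbox; cbn; eauto.
  - eapply r_nbox_1; eauto.
Qed.

Lemma prov_nbox_of_dia (L : logic) (D G : list form) (a d : form) :
  block L BoxNeg = block L DiaPos -> Permutation D (Dia a :: G) ->
  prov L (modal_premises L DiaPos G ++ [a]) (Neg d) -> prov L D (Neg (Box d)).
Proof.
  destruct L; cbn; rewrite ?app_nil_r, <-?app_assoc; intros Hb HD H; try discriminate.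
  - eapply r_nbox_join; eauto.
  - eapply r_nbox_1join; eauto.
Qed.

Lemma prov_dia_of_nbox (L : logic) (D G : list form) (a d : form) :
  block L DiaPos = block L BoxNeg -> Permutation D (Neg (Box a) :: G) ->
  prov L (modal_premises L BoxNeg G ++ [Neg a]) d -> prov L D (Dia d).
Proof.
  destruct L; cbn; rewrite ?app_nil_r, <-?app_assoc; intros Hb HD H; try discriminate.
  - eapply r_dia_join; eauto.
  - eapply r_dia_1join; eauto.
Qed.

Definition meets_obligation (L : logic) (k : kind) (X : world L) (goal : option form) : Prop :=
  (block L DiaPos = block L k -> forall d, obligation X = Some (Dia d) ->
     ~ prov L (ctx X) (Dia d) -> goal = Some d) /\
  (block L BoxNeg = block L k -> forall d, obligation X = Some (Neg (Box d)) ->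
     ~ prov L (ctx X) (Neg (Box d)) -> goal = Some (Neg d)).

Lemma successor (L : logic) (k : kind) (X : world L) (Z : list form) (goal : option form) :
  incl (modal_premises L k (ctx X)) Z -> meets_obligation L k X goal -> avoids L Z goal ->
  exists Y, rel L k X Y /\ incl Z (facts Y) /\ avoids L (ctx Y) goal.
Proof.
  intros HZ [Hdia Hnbox] Hav.
  destruct (extend_to_world L Z Z goal (accounted_refl Z) Hav) as (Y & HY & HavY).
  exists Y; split; [|auto].
  intros [] Hj; cbn.
  - intros a Ha; apply HY, HZ; unfold modal_premises.
    destruct (kind_eq_dec (block L BoxPos) (block L k)); [|contradiction].
    apply in_or_app; left; apply in_boxes, Ha.
  - intros d Ho Hn; rewrite (Hnbox Hj d Ho Hn) in HavY; exact HavY.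
  - intros d Ho Hn; rewrite (Hdia Hj d Ho Hn) in HavY; exact HavY.
  - intros a Ha; apply HY, HZ; unfold modal_premises.
    destruct (kind_eq_dec (block L DiaNeg) (block L k)); [|contradiction].
    apply in_or_app; right; apply in_ndias, Ha.
Qed.

Lemma witness (L : logic) (k : kind) (X : world L) (Z : list form) :
  incl (modal_premises L k (ctx X)) Z ->
  (block L DiaPos = block L k -> forall d, prov L Z d -> prov L (ctx X) (Dia d)) ->
  (block L BoxNeg = block L k -> forall d, prov L Z (Neg d) -> prov L (ctx X) (Neg (Box d))) ->
  exists Y, rel L k X Y /\ incl Z (facts Y).
Proof.
  intros HZ Hdia Hnbox.
  enough (Hgoal : exists goal, meets_obligation L k X goal /\ avoids L Z goal).
  { destruct Hgoal as (goal & Hobl & Hav).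
    destruct (successor L k X Z goal HZ Hobl Hav) as (Y & HR & HY & _); eauto. }
  destruct (classic (exists d, obligation X = Some (Dia d) /\
                       block L DiaPos = block L k /\ ~ prov L (ctx X) (Dia d)))
    as [(d & Ho & Hb & Hn)|Hno_dia].
  { exists (Some d); split; [split|cbn; auto].
    - intros _ d' Ho' _; rewrite Ho in Ho'; injection Ho' as ->; reflexivity.
    - intros _ d' Ho'; rewrite Ho in Ho'; discriminate. }
  destruct (classic (exists d, obligation X = Some (Neg (Box d)) /\
                       block L BoxNeg = block L k /\ ~ prov L (ctx X) (Neg (Box d))))
    as [(d & Ho & Hb & Hn)|Hno_nbox].
  { exists (Some (Neg d)); split; [split|cbn; auto].
    - intros _ d' Ho'; rewrite Ho in Ho'; discriminate.
    - intros _ d' Ho' _; rewrite Ho in Ho'; injection Ho' as ->; reflexivity. }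
  exists None; split; [split|exact I]; intros Hb d Ho Hn; exfalso; eauto.
Qed.

Definition signed (b : bool) (phi : form) : form := if b then phi else Neg phi.

Definition truthful (L : logic) (b : bool) (phi : form) : Prop :=
  forall X : world L,
    (In (signed b phi) (facts X) -> sup (canonical L) b phi X) /\
    (sup (canonical L) b phi X -> prov L (ctx X) (signed b phi)).

Lemma truthful_var (L : logic) (b : bool) (p : nat) : truthful L b (Var p).
Proof.
  intro X; destruct b; cbn; split; auto;
    intro H; [apply ax_in | apply nax_in]; apply fact_in_ctx; auto.
Qed.

Lemma truthful_neg_pos (L : logic) (a : form) :
  truthful L false a -> truthful L true (Neg a).
Proof. exact (fun H => H). Qed.

Lemma truthful_neg_neg (L : logic) (a : form) :
  truthful L true a -> truthful L false (Neg a).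
Proof.
  intros IHa X; destruct (IHa X) as [Ha1 Ha2]; cbn; split.
  - intro H; apply Ha1; destruct (fact_cases L X _ H) as [[_ []]|Ha]; exact Ha.
  - intro H; apply nn_r, Ha2, H.
Qed.

Lemma truthful_and_pos (L : logic) (a c : form) :
  truthful L true a -> truthful L true c -> truthful L true (And a c).
Proof.
  intros IHa IHc X; destruct (IHa X) as [Ha1 Ha2], (IHc X) as [Hc1 Hc2]; cbn; split.
  - intro H; destruct (fact_cases L X _ H) as [[_ []]|[]]; auto.
  - intros []; apply and_r; auto.
Qed.

Lemma truthful_and_neg (L : logic) (a c : form) :
  truthful L false a -> truthful L false c -> truthful L false (And a c).
Proof.
  intros IHa IHc X; destruct (IHa X) as [Ha1 Ha2], (IHc X) as [Hc1 Hc2]; cbn; split.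
  - intro H; destruct (fact_cases L X _ H) as [[_ []]|[]]; auto.
  - intros []; [apply nand_r1 | apply nand_r2]; auto.
Qed.

Lemma truthful_or_pos (L : logic) (a c : form) :
  truthful L true a -> truthful L true c -> truthful L true (Or a c).
Proof.
  intros IHa IHc X; destruct (IHa X) as [Ha1 Ha2], (IHc X) as [Hc1 Hc2]; cbn; split.
  - intro H; destruct (fact_cases L X _ H) as [[_ []]|[]]; auto.
  - intros []; [apply or_r1 | apply or_r2]; auto.
Qed.

Lemma truthful_or_neg (L : logic) (a c : form) :
  truthful L false a -> truthful L false c -> truthful L false (Or a c).
Proof.
  intros IHa IHc X; destruct (IHa X) as [Ha1 Ha2], (IHc X) as [Hc1 Hc2]; cbn; split.
  - intro H; destruct (fact_cases L X _ H) as [[_ []]|[]]; auto.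
  - intros []; apply nor_r; auto.
Qed.

Lemma truthful_imp_pos (L : logic) (a c : form) :
  truthful L true a -> truthful L true c -> truthful L true (Imp a c).
Proof.
  intros IHa IHc X; cbn; split.
  - intros H X' HX' Ha; apply (proj1 (IHc X')).
    destruct (fact_cases L X' _ (HX' _ H)) as [[_ [Hc|Hn]]|Hc]; auto.
    exfalso; apply Hn, (proj2 (IHa X')), Ha.
  - intro H; apply imp_r, NNPP; intro Hn.
    destruct (extend_to_world L (a :: facts X) (a :: ctx X) (Some c)) as (Y & HY & HavY);
      [apply accounted_cons, (proj1 (saturation X)) | exact Hn |].
    apply HavY, (proj2 (IHc Y)), H.
    + intros x Hx; apply HY; right; exact Hx.
    + apply (proj1 (IHa Y)), HY; left; reflexivity.
Qed.

Lemma truthful_imp_neg (L : logic) (a c : form) :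
  truthful L true a -> truthful L false c -> truthful L false (Imp a c).
Proof.
  intros IHa IHc X; destruct (IHa X) as [Ha1 Ha2], (IHc X) as [Hc1 Hc2]; cbn; split.
  - intro H; destruct (fact_cases L X _ H) as [[_ []]|[]]; auto.
  - intros []; apply nimp_r; auto.
Qed.

Lemma truthful_box_pos (L : logic) (a : form) :
  truthful L true a -> truthful L true (Box a).
Proof.
  intros IHa X; cbn; split.
  - intros H X' HX' Y HR; apply (proj1 (IHa Y)), (HR BoxPos eq_refl).
    apply fact_in_ctx; [apply HX', H | intros []].
  - intro H; apply prov_box, NNPP; intro Hn.
    destruct (successor L BoxPos (with_obligation X None) (modal_premises L BoxPos (ctx X))
                (Some a)) as (Y & HR & _ & HavY);
      [apply incl_refl | split; discriminate | exact Hn |].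
    exact (HavY (proj2 (IHa Y) (H (with_obligation X None) (incl_refl _) Y HR))).
Qed.

Lemma truthful_box_neg (L : logic) (a : form) :
  truthful L false a -> truthful L false (Box a).
Proof.
  intros IHa X; cbn; split.
  - intros H X' HX'.
    assert (Hin : In (Neg (Box a)) (ctx X')) by (apply fact_in_ctx; [apply HX', H | intros []]).
    destruct (in_Permutation_cons _ _ Hin) as [G HG].
    destruct (witness L BoxNeg X' (modal_premises L BoxNeg G ++ [Neg a])) as (Y & HR & HY).
    + apply incl_appl; intros x Hx.
      exact (Permutation_in _ (Permutation_modal_premises L BoxNeg _ _ HG) Hx).
    + intros Hb d; apply (prov_dia_of_nbox L _ G a d Hb HG).
    + intros _ d; apply (prov_nbox L _ G a d HG).
    + exists Y; split; [exact HR|].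
      apply (proj1 (IHa Y)), HY, in_or_app; right; left; reflexivity.
  - intro H; apply NNPP; intro Hn.
    destruct (H (with_obligation X (Some (Neg (Box a)))) (incl_refl _)) as (Y & HR & HY).
    exact (HR BoxNeg eq_refl a eq_refl Hn (proj2 (IHa Y) HY)).
Qed.

Lemma truthful_dia_pos (L : logic) (a : form) :
  truthful L true a -> truthful L true (Dia a).
Proof.
  intros IHa X; cbn; split.
  - intros H X' HX'.
    assert (Hin : In (Dia a) (ctx X')) by (apply fact_in_ctx; [apply HX', H | intros []]).
    destruct (in_Permutation_cons _ _ Hin) as [G HG].
    destruct (witness L DiaPos X' (modal_premises L DiaPos G ++ [a])) as (Y & HR & HY).
    + apply incl_appl; intros x Hx.
      exact (Permutation_in _ (Permutation_modal_premises L DiaPos _ _ HG) Hx).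
    + intros _ d; apply (prov_dia L _ G a d HG).
    + intros Hb d; apply (prov_nbox_of_dia L _ G a d Hb HG).
    + exists Y; split; [exact HR|].
      apply (proj1 (IHa Y)), HY, in_or_app; right; left; reflexivity.
  - intro H; apply NNPP; intro Hn.
    destruct (H (with_obligation X (Some (Dia a))) (incl_refl _)) as (Y & HR & HY).
    exact (HR DiaPos eq_refl a eq_refl Hn (proj2 (IHa Y) HY)).
Qed.

Lemma truthful_dia_neg (L : logic) (a : form) :
  truthful L false a -> truthful L false (Dia a).
Proof.
  intros IHa X; cbn; split.
  - intros H X' HX' Y HR; apply (proj1 (IHa Y)), (HR DiaNeg eq_refl).
    apply fact_in_ctx; [apply HX', H | intros []].
  - intro H; apply prov_ndia, NNPP; intro Hn.
    destruct (successor L DiaNeg (with_obligation X None) (modal_premises L DiaNeg (ctx X))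
                (Some (Neg a))) as (Y & HR & _ & HavY);
      [apply incl_refl | split; discriminate | exact Hn |].
    exact (HavY (proj2 (IHa Y) (H (with_obligation X None) (incl_refl _) Y HR))).
Qed.

Lemma truth (L : logic) (phi : form) (b : bool) : truthful L b phi.
Proof.
  revert b; induction phi; intros []; auto using truthful_var, truthful_neg_pos,
    truthful_neg_neg, truthful_and_pos, truthful_and_neg, truthful_or_pos,
    truthful_or_neg, truthful_imp_pos, truthful_imp_neg, truthful_box_pos,
    truthful_box_neg, truthful_dia_pos, truthful_dia_neg.
Qed.

Lemma sup_fold_left_And (M : model) (w : W M) (g : form) (gs : list form) :
  sup M true g w -> (forall x, In x gs -> sup M true x w) ->
  sup M true (fold_left And gs g) w.
Proof.
  revert g; induction gs as [|h gs IH]; intros g Hg Hgs; cbn; [exact Hg|].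
  apply IH; [split; [exact Hg | apply Hgs; left; reflexivity] |].
  intros x Hx; apply Hgs; right; exact Hx.
Qed.

Theorem theorem6 (L : logic) (G : list form) (phi : form) :
  seq_valid L G phi -> prov L G phi.
Proof.
  intro Hvalid; apply NNPP; intro Hn.
  destruct (extend_to_world L G G (Some phi) (accounted_refl G) Hn) as (X & HG & HX).
  pose proof (canonical_is_model L X) as HM.
  assert (Hfacts : forall x, In x G -> sup (canonical L) true x X)
    by (intros x Hx; apply (proj1 (truth L x true X)), HG, Hx).
  apply HX, (proj2 (truth L phi true X)).
  destruct G as [|g gs]; cbn in Hvalid.
  - exact (Hvalid _ HM X).
  - apply (Hvalid _ HM X X (incl_refl _)), sup_fold_left_And; auto using in_cons, in_eq.
Qed.
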